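(* Let $\Omega$ be a set of additive functions $\psi:\mathcal{C}\to\mathbb{R}$ satisfying $|\psi(\mathcal{L})|\le g_4(\mathcal{L})$ for all $\mathcal{L}\in\mathcal{C}$, and let $\nu_1,\nu_2:\mathcal{C}\to\mathbb{Z}$ be additive functions. If $\mathcal{K},\mathcal{J}\in\mathcal{C}$ satisfy $\nu_1(\mathcal{K})=1$ and $\nu_2(\mathcal{J})=1$, then \[\delta([\mathcal{K}],[\mathcal{J}])\ge\inf_{a,b\in\mathbb{Z},\ ab\neq0}\ \sup_{\psi\in\Omega}\ \big|a\psi(\mathcal{K})-b\psi(\mathcal{J})\big|.\]
   Context: $\mathcal{C}$ is the smooth knot concordance group; $g_4$ is the smooth four-genus; $d(\mathcal{K},\mathcal{J})=g_4(\mathcal{K}\,\#\,-\mathcal{J})$. Let $\mathcal{C}^\circ=\mathcal{C}\setminus\{0\}$; $\mathcal{K}\sim'\mathcal{J}$ if there exist $\mathcal{M}\in\mathcal{C}$ and $r,s\in\mathbb{Z}$ with $\mathcal{K}=r\mathcal{M}$, $\mathcal{J}=s\mathcal{M}$; $\sim$ is the equivalence relation generated by $\sim'$; $\mathbb{P}(\mathcal{C})=\mathcal{C}^\circ/\sim$. $\delta([\mathcal{K}],[\mathcal{J}])=\min\{d(\mathcal{K}',\mathcal{J}'):\mathcal{K}'\in[\mathcal{K}],\mathcal{J}'\in[\mathcal{J}]\}$. *)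

From HB Require Import structures.
From mathcomp Require Import all_boot all_order all_algebra.
From mathcomp Require Import all_classical all_reals ereal.

From Stdlib Require Import Relations.
Set Implicit Arguments. Unset Strict Implicit. Unset Printing Implicit Defensive.
Import Order.TTheory GRing.Theory Num.Theory.
Local Open Scope ring_scope.
Local Open Scope classical_set_scope.

(* The smooth concordance group is modelled abstractly as an arbitrary
   abelian group C (a zmodType) together with an arbitrary nat-valued
   "four-genus" g4 : C -> nat. *)

Definition additive_fun (C A : zmodType) (f : C -> A) : Prop :=
  forall x y : C, f (x + y) = f x + f y.

Definition sim' (C : zmodType) (K J : C) : Prop :=
  exists (M : C) (r s : int), K = M *~ r /\ J = M *~ s.

Definition sim (C : zmodType) (K J : C) : Prop :=
  clos_refl_sym_trans C (fun x y => x <> 0 /\ y <> 0 /\ sim' x y) K J.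

Definition dist (C : zmodType) (g4 : C -> nat) (K J : C) : nat := g4 (K - J).

(* delta([K],[J]) = min { d(K',J') : K' ~ K, J' ~ J }, as an extended real
   (the infimum of a nonempty set of naturals, which is attained). *)
Definition delta (R : realType) (C : zmodType) (g4 : C -> nat) (K J : C)
  : \bar R :=
  ereal_inf [set ((dist g4 K' J')%:R)%:E
            | K' in [set K' | sim K' K] & J' in [set J' | sim J' J]].

(* A knot K' equivalent to K is commensurable with it: K' *~ p = K *~ q with
   p, q nonzero.  Applying the integer-valued homomorphism nu1 (nu1 K = 1)
   shows q = p * nu1 K', and hence, dividing by p in R, psi K' = a psi K with
   a := nu1 K' nonzero, for every real additive psi.  Likewise psi J' = b psi J
   with b := nu2 J'.  So for every psi in Omega,
   |a psi K - b psi J| = |psi (K' - J')| <= g4 (K' - J') = d(K', J'),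
   i.e. the pair (a, b) witnesses that the infimum is at most d(K', J'). *)
From HB Require Import structures.
From mathcomp Require Import all_boot all_order all_algebra.
From mathcomp Require Import all_classical all_reals ereal.
From Stdlib Require Import Relations.

Set Implicit Arguments. Unset Strict Implicit.
Import Order.TTheory GRing.Theory Num.Theory.
Local Open Scope ring_scope.
Local Open Scope classical_set_scope.

Section AdditiveFunctions.
Variables (C A : zmodType) (f : C -> A).
Hypothesis f_add : additive_fun f.

Lemma additive_fun0 : f 0 = 0.
Proof. by apply: (addrI (f 0)); rewrite -f_add !addr0. Qed.

Lemma additive_funN x : f (- x) = - f x.
Proof. by apply: (addrI (f x)); rewrite -f_add !subrr additive_fun0. Qed.

Lemma additive_funB x y : f (x - y) = f x - f y.
Proof. by rewrite f_add additive_funN. Qed.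

Lemma additive_funMn x n : f (x *+ n) = f x *+ n.
Proof.
by elim: n => [|n IHn]; rewrite ?mulr0n ?additive_fun0 // !mulrS f_add IHn.
Qed.

Lemma additive_funMz x n : f (x *~ n) = f x *~ n.
Proof.
by case: n => n; rewrite ?NegzE ?mulrNz ?additive_funN additive_funMn.
Qed.

End AdditiveFunctions.

Definition commensurable (C : zmodType) (x y : C) : Prop :=
  exists p q : int, [/\ p != 0, q != 0 & x *~ p = y *~ q].

Lemma commensurable_refl (C : zmodType) (x : C) : commensurable x x.
Proof. by exists 1, 1. Qed.

Lemma commensurable_sym (C : zmodType) (x y : C) :
  commensurable x y -> commensurable y x.
Proof. by case=> p [q [p0 q0 e]]; exists q, p. Qed.

Lemma commensurable_trans (C : zmodType) (x y z : C) :
  commensurable x y -> commensurable y z -> commensurable x z.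
Proof.
case=> p [q [p0 q0 exy]] [p' [q' [p0' q0' eyz]]].
exists (p * p'), (q * q'); split; rewrite ?mulf_neq0 //.
rewrite !mulrzA exy -!mulrzA (mulrC q p') (mulrzA y) eyz.
by rewrite -!mulrzA (mulrC q' q).
Qed.

Lemma sim'_commensurable (C : zmodType) (x y : C) :
  x <> 0 -> y <> 0 -> sim' x y -> commensurable x y.
Proof.
move=> x0 y0 [M [r [s [ex ey]]]]; subst x y.
have r0 : r != 0 by apply: contra_notN x0 => /eqP->; rewrite mulr0z.
have s0 : s != 0 by apply: contra_notN y0 => /eqP->; rewrite mulr0z.
by exists s, r; split => //; rewrite -!mulrzA mulrC.
Qed.

Lemma sim_commensurable (C : zmodType) (x y : C) :
  sim x y -> commensurable x y.
Proof.
elim=> {x y} [x y [x0 [y0]]|x|x y _|x y z _ Hxy _ Hyz].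
- exact: sim'_commensurable.
- exact: commensurable_refl.
- exact: commensurable_sym.
- exact: commensurable_trans Hyz.
Qed.

Section UnitNormalised.
Variables (C : zmodType) (nu : C -> int) (X X' : C).
Hypotheses (nu_add : additive_fun nu) (nuX : nu X = 1).
Hypothesis X'X : commensurable X' X.

Lemma commensurable_scale_eq p q : X' *~ p = X *~ q -> q = p * nu X'.
Proof.
by move=> /(congr1 nu); rewrite !additive_funMz // nuX !mulrzz mul1r mulrC.
Qed.

Lemma commensurable_scale_neq0 : nu X' != 0.
Proof.
case: X'X => p [q [_ q0 /commensurable_scale_eq eq]].
by apply: contraNneq q0 => nu0; rewrite eq nu0 mulr0.
Qed.

Lemma commensurable_scaleE (R : numDomainType) (psi : C -> R) :
  additive_fun psi -> psi X' = (nu X')%:~R * psi X.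
Proof.
move=> psi_add; case: X'X => p [q [p0 _ e]].
have pR : (p%:~R : R) != 0 by rewrite intr_eq0.
apply: (mulfI pR); rewrite mulrA -intrM -(commensurable_scale_eq e) !mulrzl.
by rewrite -!(additive_funMz psi_add) e.
Qed.

End UnitNormalised.

Theorem theorem7p3 (R : realType) (C : zmodType) (g4 : C -> nat)
  (Omega : set (C -> R))
  (HOmega_add : forall psi, Omega psi -> additive_fun psi)
  (HOmega_bd : forall psi, Omega psi -> forall L : C, `|psi L| <= (g4 L)%:R)
  (nu1 nu2 : C -> int)
  (Hnu1 : additive_fun nu1) (Hnu2 : additive_fun nu2)
  (K J : C) (HK : nu1 K = 1) (HJ : nu2 J = 1) :
  (ereal_inf
     [set ereal_sup [set (`|ab.1%:~R * psi K - ab.2%:~R * psi J|)%:E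
                    | psi in Omega]
     | ab in [set ab : int * int | (ab.1 * ab.2 != 0)%R]]
   <= delta R g4 K J)%E.
Proof.
apply: le_ereal_inf_tmp => _
  [K' /sim_commensurable K'K] [J' /sim_commensurable J'J] <-.
apply: ge_ereal_inf; exists (ereal_sup
  [set (`|(nu1 K')%:~R * psi K - (nu2 J')%:~R * psi J|)%:E | psi in Omega]).
  exists (nu1 K', nu2 J') => //=.
  by rewrite mulf_neq0 // ?(commensurable_scale_neq0 Hnu1 HK)
                          ?(commensurable_scale_neq0 Hnu2 HJ).
apply: ge_ereal_sup => _ [psi Opsi <-]; have psi_add := HOmega_add _ Opsi.
rewrite lee_fin -(commensurable_scaleE Hnu1 HK K'K psi_add).
rewrite -(commensurable_scaleE Hnu2 HJ J'J psi_add) -additive_funB //.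
exact: HOmega_bd.
Qed.
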